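(* Let $R$ be a commutative ring with finitely many minimal prime ideals which is a multiplication ring; equivalently, $R\cong \prod_{i=1}^{n} D_{i}$ is a finite direct product of rings where each $D_{i}$ is either a Dedekind domain or an Artinian, local principal ideal ring. Let $1=e_1+\cdots+e_n$ be the corresponding decomposition of $1$ into central orthogonal idempotents of $R$ (so $e_iR\cong D_i$). Let $M$ be an $R$-module and write $M=\bigoplus_{i=1}^n M_i$ where $M_i:=e_iM$ (a $D_i$-module). Then $M$ is a multiplication $R$-module if and only if for each $i=1,\ldots,n$ the $D_i$-module $M_i$ is isomorphic to $D_i$, or to $D_i/I_i$ for some nonzero ideal $I_i$ of $D_i$, or (only in the case when $D_i$ is a Dedekind domain) to a nonzero ideal of $D_i$.
   Context: All rings are commutative with $1$ and all modules are unital. A ring $R$ is a multiplication ring if whenever $I,J$ are ideals of $R$ with $J\subseteq I$, there is an ideal $I'$ of $R$ with $J=I'I$. An $R$-module $M$ is a multiplication module if every submodule of $M$ equals $IM$ for some ideal $I$ of $R$. *)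

(* Ideals and submodules are represented as Prop-valued
   predicates (R -> Prop, M -> Prop); the factor rings D_i are represented
   internally as the corner rings e_i R of R (identity element e_i). *)
From HB Require Import structures.
From mathcomp Require Import all_boot all_order all_algebra.
Set Implicit Arguments.
Unset Strict Implicit.
Unset Printing Implicit Defensive.
Import GRing.Theory.
Local Open Scope ring_scope.

Section Defs.
Variable R : comNzRingType.

Definition ideal (I : R -> Prop) : Prop :=
  I 0 /\ (forall x y, I x -> I y -> I (x + y)) /\ (forall r x, I x -> I (r * x)).

Definition ideal_mul (I J : R -> Prop) (x : R) : Prop :=
  exists (k : nat) (a b : 'I_k -> R),
    (forall t, I (a t) /\ J (b t)) /\ x = \sum_(t < k) a t * b t.

Definition multiplication_ring : Prop :=
  forall I J : R -> Prop, ideal I -> ideal J -> (forall x, J x -> I x) ->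
    exists I' : R -> Prop, ideal I' /\ forall x, J x <-> ideal_mul I' I x.

Definition prime_ideal (P : R -> Prop) : Prop :=
  ideal P /\ ~ P 1 /\ (forall x y, P (x * y) -> P x \/ P y).

Definition minimal_prime (P : R -> Prop) : Prop :=
  prime_ideal P /\
  forall Q, prime_ideal Q -> (forall x, Q x -> P x) -> forall x, P x -> Q x.

Definition finitely_many_minimal_primes : Prop :=
  exists (k : nat) (P : 'I_k -> R -> Prop),
    forall Q, minimal_prime Q -> exists t, forall x, Q x <-> P t x.

Definition corner (e : R) (x : R) : Prop := exists r, x = e * r.

(* ideals of the ring eR (equivalently: ideals of R contained in eR) *)
Definition ideal_of (e : R) (I : R -> Prop) : Prop :=
  I 0 /\ (forall x y, I x -> I y -> I (x + y)) /\
  (forall r x, corner e r -> I x -> I (r * x)) /\ (forall x, I x -> corner e x).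

Definition nonzero_ideal (I : R -> Prop) : Prop := exists x, I x /\ x != 0.

Definition corner_domain (e : R) : Prop :=
  e != 0 /\ forall x y, corner e x -> corner e y -> x * y = 0 -> x = 0 \/ y = 0.

Definition corner_noetherian (e : R) : Prop :=
  forall I, ideal_of e I ->
    exists (k : nat) (g : 'I_k -> R), (forall t, I (g t)) /\
      forall x, I x <-> exists c : 'I_k -> R,
                  (forall t, corner e (c t)) /\ x = \sum_(t < k) c t * g t.

Definition corner_prime (e : R) (P : R -> Prop) : Prop :=
  ideal_of e P /\ ~ P e /\
  (forall x y, corner e x -> corner e y -> P (x * y) -> P x \/ P y).

Definition corner_maximal (e : R) (P : R -> Prop) : Prop :=
  ideal_of e P /\ ~ P e /\
  forall J, ideal_of e J -> (forall x, P x -> J x) -> ~ J e -> forall x, J x -> P x.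

Definition corner_dim_le1 (e : R) : Prop :=
  forall P, corner_prime e P -> nonzero_ideal P -> corner_maximal e P.

(* eR integrally closed (in its fraction field): if a/b (b <> 0) is a root of a
   monic polynomial of degree k over eR, i.e.
   a^k + sum_{t<k} c_t a^t b^(k-t) = 0, then b divides a in eR. *)
Definition corner_integrally_closed (e : R) : Prop :=
  forall a b, corner e a -> corner e b -> b != 0 ->
    (exists (k : nat) (c : 'I_k -> R), (forall t, corner e (c t)) /\
       a ^+ k + \sum_(t < k) c t * a ^+ t * b ^+ (k - t) = 0) ->
    exists d, corner e d /\ a = d * b.

Definition corner_dedekind (e : R) : Prop :=
  corner_domain e /\ corner_noetherian e /\ corner_dim_le1 e /\
  corner_integrally_closed e.

Definition corner_artinian (e : R) : Prop :=
  forall I : nat -> R -> Prop, (forall t, ideal_of e (I t)) ->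
    (forall t x, I t.+1 x -> I t x) ->
    exists N, forall t, (N <= t)%N -> forall x, I t x <-> I N x.

Definition corner_local (e : R) : Prop :=
  exists P, corner_maximal e P /\
    forall Q, corner_maximal e Q -> forall x, Q x <-> P x.

Definition corner_pir (e : R) : Prop :=
  forall I, ideal_of e I -> exists a, I a /\
    forall x, I x <-> exists r, corner e r /\ x = r * a.

Definition corner_artinian_local_pir (e : R) : Prop :=
  corner_artinian e /\ corner_local e /\ corner_pir e.

Variable M : lmodType R.

Definition submodule (N : M -> Prop) : Prop :=
  N 0 /\ (forall x y, N x -> N y -> N (x + y)) /\ (forall r x, N x -> N (r *: x)).

Definition ideal_smul (I : R -> Prop) (x : M) : Prop :=
  exists (k : nat) (r : 'I_k -> R) (m : 'I_k -> M),
    (forall t, I (r t)) /\ x = \sum_(t < k) r t *: m t.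

Definition multiplication_module : Prop :=
  forall N, submodule N -> exists I, ideal I /\ forall x, N x <-> ideal_smul I x.

Definition component (e : R) (x : M) : Prop := exists m, x = e *: m.

End Defs.

(* A (given as a subset of V) and B (subset of W) are isomorphic as modules over
   the scalar ring S (a subset of R, here S = eR): there is a bijection A -> B
   which is additive and S-linear. *)
Definition iso_on (R : comNzRingType) (V W : lmodType R) (S : R -> Prop)
    (A : V -> Prop) (B : W -> Prop) : Prop :=
  exists f : V -> W,
    (forall x, A x -> B (f x)) /\
    (forall x y, A x -> A y -> f (x + y) = f x + f y) /\
    (forall a x, S a -> A x -> f (a *: x) = a *: f x) /\
    (forall x y, A x -> A y -> f x = f y -> x = y) /\
    (forall y, B y -> exists x, A x /\ f x = y).

(* B is isomorphic (over S) to the quotient A / I: there is a surjective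
   additive S-linear map A -> B whose kernel is exactly I (the isomorphism
   A/I ~ B being the induced map). *)
Definition quot_iso_on (R : comNzRingType) (V W : lmodType R) (S : R -> Prop)
    (A : V -> Prop) (I : V -> Prop) (B : W -> Prop) : Prop :=
  exists f : V -> W,
    (forall x, A x -> B (f x)) /\
    (forall x y, A x -> A y -> f (x + y) = f x + f y) /\
    (forall a x, S a -> A x -> f (a *: x) = a *: f x) /\
    (forall x, A x -> (f x = 0 <-> I x)) /\
    (forall y, B y -> exists x, A x /\ f x = y).

From HB Require Import structures.
From mathcomp Require Import all_boot all_order all_algebra.
From Stdlib Require Import Classical ClassicalEpsilon.
Import GRing.Theory.
Local Open Scope ring_scope.
Set Implicit Arguments.
Unset Strict Implicit.
Unset Printing Implicit Defensive.

(* If every component eM is a homomorphic image of an ideal A of eR, then a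
   submodule N equals (N : M) M: the elements of A mapped into N form an ideal,
   which R being a multiplication ring writes as I' A, and then I' e carries
   eM into N.  Over an Artinian local
   principal ideal ring eR the generator of the maximal ideal P is nilpotent,
   so eM is generated by any element outside P eM (or is zero), by a Nakayama
   argument.  Over a Dedekind domain eR, either some x in eM is torsion-free,
   then all of eM is, and multiplication by a nonzero element of (eR x : eM)
   embeds eM into eR x = eR as an ideal; or eM is torsion, and Noetherian
   induction, using I = I1 P and cancellation, produces z in eM outside Q eM
   for every maximal Q above ann(eM), so (eR z : eM) = eR and z generates eM.
   A cyclic eM is eR or a proper quotient of it. *)

Definition incl (T : Type) (A B : T -> Prop) : Prop := forall x, A x -> B x.

Lemma not_incl (T : Type) (A B : T -> Prop) : ~ incl A B -> exists2 x, A x & ~ B x.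
Proof.
by move=> h; apply: NNPP => hno; apply: h => x hx; apply: NNPP => hB; apply: hno; exists x.
Qed.

Section IdealArith.
Variables (R : comNzRingType) (M : lmodType R).

Lemma ideal_sum (I : R -> Prop) k (F : 'I_k -> R) :
  ideal I -> (forall t, I (F t)) -> I (\sum_(t < k) F t).
Proof. by case=> h0 [hD _] hF; apply: big_ind. Qed.

Lemma ideal_mul_mem (I J : R -> Prop) a b : I a -> J b -> ideal_mul I J (a * b).
Proof.
by move=> ha hb; exists 1%N, (fun _ => a), (fun _ => b); rewrite big_ord1.
Qed.

Lemma ideal_mul_sub (I J K : R -> Prop) x : ideal K ->
  (forall a b, I a -> J b -> K (a * b)) -> ideal_mul I J x -> K x.
Proof.
move=> hK hIJ [k [a [b [h ->]]]]; apply: ideal_sum => // t.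
by case: (h t) => ha hb; exact: hIJ.
Qed.

Lemma ideal_mulWl (I J K : R -> Prop) x : incl I J -> ideal_mul I K x -> ideal_mul J K x.
Proof.
by move=> hIJ [k [a [b [h ->]]]]; exists k, a, b; split => // t; case: (h t); split; auto.
Qed.

Lemma ideal_mul_subl (I J : R -> Prop) x : ideal I -> ideal_mul I J x -> I x.
Proof.
move=> hI; apply: ideal_mul_sub => // a b ha _.
by rewrite mulrC; case: hI => _ [_ hM]; exact: hM.
Qed.

Lemma submodule_sum (N : M -> Prop) k (F : 'I_k -> M) :
  submodule N -> (forall t, N (F t)) -> N (\sum_(t < k) F t).
Proof. by case=> h0 [hD _] hF; apply: big_ind. Qed.

Lemma ideal_smul_mem I r (m : M) : I r -> ideal_smul I (r *: m).
Proof.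
by move=> hr; exists 1%N, (fun _ => r), (fun _ => m); rewrite big_ord1.
Qed.

Lemma ideal_smulD I (x y : M) :
  ideal_smul I x -> ideal_smul I y -> ideal_smul I (x + y).
Proof.
move=> [k1 [r1 [m1 [h1 ->]]]] [k2 [r2 [m2 [h2 ->]]]].
exists (k1 + k2)%N.
exists (fun t => match split t with inl a => r1 a | inr b => r2 b end).
exists (fun t => match split t with inl a => m1 a | inr b => m2 b end).
split; first by move=> t; case: (split t).
rewrite big_split_ord /=; congr (_ + _); apply: eq_bigr => i _.
- by have := unsplitK (inl i : 'I_k1 + 'I_k2) => /= ->.
- by have := unsplitK (inr i : 'I_k1 + 'I_k2) => /= ->.
Qed.

Lemma ideal_smul_sum I k (F : 'I_k -> M) :
  (forall t, ideal_smul I (F t)) -> ideal_smul I (\sum_(t < k) F t).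
Proof.
move=> hF; apply: (big_ind (ideal_smul I)) => //; last exact: ideal_smulD.
by exists 0%N, (fun _ => 0), (fun _ => 0); split; [case | rewrite big_ord0].
Qed.

Lemma ideal_smulZ I a (x : M) : ideal I -> ideal_smul I x -> ideal_smul I (a *: x).
Proof.
move=> [_ [_ hM]] [k [r [m [h ->]]]].
exists k, (fun t => a * r t), m; split; first by move=> t; exact: hM.
by rewrite scaler_sumr; apply: eq_bigr => t _; rewrite scalerA.
Qed.

Lemma ideal_smulB I (x y : M) :
  ideal I -> ideal_smul I x -> ideal_smul I y -> ideal_smul I (x - y).
Proof.
by move=> hI hx hy; apply: ideal_smulD => //; rewrite -scaleN1r; exact: ideal_smulZ.
Qed.

Lemma ideal_smulW (I J : R -> Prop) (x : M) :
  incl I J -> ideal_smul I x -> ideal_smul J x.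
Proof. by move=> hIJ [k [r [m [h ->]]]]; exists k, r, m; split => // t; exact: hIJ. Qed.

Definition colon (N : M -> Prop) (r : R) : Prop := forall m, N (r *: m).

Lemma colon_ideal N : submodule N -> ideal (colon N).
Proof.
case=> N0 [ND NZ]; split; first by move=> m; rewrite scale0r.
split; first by move=> x y hx hy m; rewrite scalerDl; exact: ND.
by move=> r x hx m; rewrite -scalerA; exact: NZ.
Qed.

Lemma ideal_smul_colon N (x : M) : submodule N -> ideal_smul (colon N) x -> N x.
Proof.
by move=> hN [k [r [m [h ->]]]]; apply: submodule_sum => // t; exact: h.
Qed.

End IdealArith.

Section Corner.
Variables (R : comNzRingType) (M : lmodType R) (e : R).
Hypothesis He : e * e = e.

Lemma cornerK x : corner e x -> e * x = x.
Proof. by case=> r ->; rewrite mulrA He. Qed.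

Lemma cornerKr x : corner e x -> x * e = x.
Proof. by move=> h; rewrite mulrC cornerK. Qed.

Lemma corner_mull x y : corner e y -> corner e (x * y).
Proof. by case=> r ->; exists (x * r); rewrite mulrCA. Qed.

Lemma corner_mulr x y : corner e x -> corner e (x * y).
Proof. by move=> h; rewrite mulrC; exact: corner_mull. Qed.

Lemma corner_e : corner e e.
Proof. by exists 1; rewrite mulr1. Qed.

Lemma corner_me x : corner e (x * e).
Proof. exact: corner_mull corner_e. Qed.

Lemma corner0 : corner e 0.
Proof. by exists 0; rewrite mulr0. Qed.

Lemma cornerD x y : corner e x -> corner e y -> corner e (x + y).
Proof. by case=> a -> [b ->]; exists (a + b); rewrite mulrDr. Qed.

Lemma cornerB x y : corner e x -> corner e y -> corner e (x - y).
Proof. by case=> a -> [b ->]; exists (a - b); rewrite mulrBr. Qed.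

Lemma ideal_ofW I : ideal_of e I -> ideal I.
Proof.
case=> h0 [hD [hM hC]]; split => //; split => // r x hx.
by rewrite -(cornerK (hC _ hx)) mulrA; apply: hM => //; exact: corner_me.
Qed.

Lemma ideal_of_corner : ideal_of e (corner e).
Proof.
split; first exact: corner0.
split; first exact: cornerD.
by split => // r x _; exact: corner_mull.
Qed.

Lemma ideal_of_meet_corner (I : R -> Prop) :
  ideal I -> ideal_of e (fun r => I r /\ corner e r).
Proof.
case=> h0 [hD hM]; split; first by split => //; exact: corner0.
split; first by move=> x y [hx cx] [hy cy]; split; [exact: hD | exact: cornerD].
by split=> [r x _ [hx cx]|x []//]; split; [exact: hM | exact: corner_mull].
Qed.

Lemma ideal_of_principal u : ideal_of e (fun x => exists2 r, corner e r & x = r * u).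
Proof.
split; first by exists 0; [exact: corner0 | rewrite mul0r].
split.
  by move=> x y [r1 h1 ->] [r2 h2 ->]; exists (r1 + r2); [exact: cornerD | rewrite mulrDl].
split=> [r x hr [r1 h1 ->]|x [r1 h1 ->]]; last exact: corner_mulr.
by exists (r * r1); [exact: corner_mull | rewrite mulrA].
Qed.

Lemma ideal_mul_corner (I P : R -> Prop) x : ideal I -> incl P (corner e) ->
  ideal_mul I P x -> ideal_mul (fun r => I r /\ corner e r) P x.
Proof.
move=> [_ [_ hM]] hP [k [a [b [hab ->]]]].
exists k, (fun t => a t * e), b; split.
  move=> t; case: (hab t) => ha hb; split => //.
  by split; [rewrite mulrC; exact: hM | exact: corner_me].
by apply: eq_bigr => t _; case: (hab t) => _ hb; rewrite -mulrA cornerK //; exact: hP.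
Qed.

Lemma componentK (m : M) : component e m -> e *: m = m.
Proof. by case=> m' ->; rewrite scalerA He. Qed.

Lemma componentZ r (m : M) : component e m -> component e (r *: m).
Proof. by case=> m' ->; exists (r *: m'); rewrite !scalerA mulrC. Qed.

Lemma component_e (m : M) : component e (e *: m).
Proof. by exists m. Qed.

Lemma component0 : component e (0 : M).
Proof. by exists 0; rewrite scaler0. Qed.

Lemma componentD (x y : M) : component e x -> component e y -> component e (x + y).
Proof. by case=> a -> [b ->]; exists (a + b); rewrite scalerDr. Qed.

Lemma componentB (x y : M) : component e x -> component e y -> component e (x - y).
Proof. by case=> a -> [b ->]; exists (a - b); rewrite scalerBr. Qed.

Lemma scale_corner a (w : M) : corner e a -> a *: w = a *: (e *: w).
Proof. by move=> ha; rewrite scalerA cornerKr. Qed.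

End Corner.

Definition epi_on (R : comNzRingType) (V W : lmodType R) (S : R -> Prop)
    (A : V -> Prop) (B : W -> Prop) : Prop :=
  exists f : V -> W,
    (forall x, A x -> B (f x)) /\
    (forall x y, A x -> A y -> f (x + y) = f x + f y) /\
    (forall a x, S a -> A x -> f (a *: x) = a *: f x) /\
    (forall y, B y -> exists x, A x /\ f x = y).

Lemma iso_on_epi (R : comNzRingType) (V W : lmodType R) S A B :
  @iso_on R V W S A B -> epi_on S A B.
Proof. by case=> f [? [? [? [_ ?]]]]; exists f. Qed.

Lemma quot_iso_on_epi (R : comNzRingType) (V W : lmodType R) S A I B :
  @quot_iso_on R V W S A I B -> epi_on S A B.
Proof. by case=> f [? [? [? [_ ?]]]]; exists f. Qed.

Section EpiComponent.
Variables (R : comNzRingType) (M : lmodType R) (e : R) (A : R -> Prop) (g : R -> M).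
Hypotheses (He : e * e = e) (hmr : multiplication_ring R) (hA : ideal_of e A).
Hypotheses (gD : forall x y, A x -> A y -> g (x + y) = g x + g y)
  (gZ : forall a x, corner e a -> A x -> g (a * x) = a *: g x)
  (gS : forall y, component e y -> exists x, A x /\ g x = y).

Let hAi := ideal_ofW He hA.

Lemma epi0 : g 0 = 0.
Proof.
case: hAi => A0 _; apply: (@addrI _ (g 0)).
by rewrite -gD // !addr0.
Qed.

Lemma epi_sum k (F : 'I_k -> R) :
  (forall t, A (F t)) -> g (\sum_(t < k) F t) = \sum_(t < k) g (F t).
Proof.
case: hAi => A0 [AD _] hF.
pose K y1 y2 := A y1 /\ g y1 = y2.
suff [] : K (\sum_(t < k) F t) (\sum_(t < k) g (F t)) by [].
apply: (big_rec2 K); first by split; last exact: epi0.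
by move=> i y1 y2 _ [hy1 <-]; split; [exact: AD | rewrite gD].
Qed.

Lemma epi_mul r c : A c -> A (r * c) /\ g (r * c) = (r * e) *: g c.
Proof.
move=> hc; have <- : (r * e) * c = r * c.
  by rewrite -mulrA (cornerK He) //; case: hA => _ [_ [_ ]]; apply.
split; last by apply: gZ => //; exact: corner_me.
by case: hAi => _ [_]; apply.
Qed.

Lemma epi_component_colon (N : M -> Prop) y :
  submodule N -> N y -> component e y -> ideal_smul (colon N) y.
Proof.
move=> hN hy hyc.
pose P c := A c /\ N (g c).
have hP : ideal P.
  case: hAi => A0 [AD AM]; case: hN => N0 [ND NZ].
  split; first by split; rewrite ?epi0.
  split; first by move=> x z [hx nx] [hz nz]; split; [exact: AD | rewrite gD //; exact: ND].
  by move=> r x [hx nx]; have [h1 h2] := epi_mul r hx; split; rewrite ?h2; [| exact: NZ].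
have [I' [_ hPI]] := hmr hAi hP (fun x (h : P x) => proj1 h).
have hcolon : forall a, I' a -> colon N (a * e).
  move=> a ha m; have [c [hc gc]] := gS (component_e e m).
  have -> : (a * e) *: m = (a * e) *: g c by rewrite gc scalerA -mulrA He.
  rewrite -(proj2 (epi_mul a hc)).
  by have [] : P (a * c) by apply/hPI; exact: ideal_mul_mem.
have [b [hb gb]] := gS hyc.
have : P b by split; rewrite ?gb.
rewrite -gb => /hPI [k [a [c [hac ->]]]].
rewrite epi_sum => [|t]; last by case: (hac t) => _ hc; case: hAi => _ [_]; apply.
apply: ideal_smul_sum => t; case: (hac t) => ha hc.
by rewrite (proj2 (epi_mul _ hc)); apply: ideal_smul_mem; exact: hcolon.
Qed.

End EpiComponent.

Lemma multiplication_module_of_epi (R : comNzRingType) (M : lmodType R) n (e : 'I_n -> R) :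
  multiplication_ring R -> (forall i, e i * e i = e i) -> \sum_(i < n) e i = 1 ->
  (forall i, exists2 A, ideal_of (e i) A &
     epi_on (V := R^o) (W := M) (corner (e i)) A (@component R M (e i))) ->
  multiplication_module M.
Proof.
move=> hmr He hsum hepi N hN; exists (colon N); split; first exact: colon_ideal.
move=> x; split; last exact: ideal_smul_colon.
move=> hx; rewrite -[x]scale1r -hsum scaler_suml; apply: ideal_smul_sum => i.
have [A hA [g [_ [gD [gZ gS]]]]] := hepi i.
apply: (epi_component_colon (He i) hmr hA gD gZ gS hN); last exact: component_e.
by case: hN => _ [_]; apply.
Qed.

Lemma chain_incl (T : Type) (I : nat -> T -> Prop) : (forall t, incl (I t) (I t.+1)) ->
  forall i j, (i <= j)%N -> incl (I i) (I j).
Proof.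
move=> hI i; elim=> [|j IH]; first by rewrite leqn0 => /eqP ->.
by rewrite leq_eqVlt => /orP [/eqP -> // | hij] x hx; apply: hI; exact: IH.
Qed.

Section NoetherianCorner.
Variables (R : comNzRingType) (e : R).
Hypotheses (He : e * e = e) (hN : corner_noetherian e).

Lemma corner_noetherian_stable (I : nat -> R -> Prop) :
  (forall t, ideal_of e (I t)) -> (forall t, incl (I t) (I t.+1)) ->
  exists N, incl (I N.+1) (I N).
Proof.
move=> hI hinc; have hmono := chain_incl hinc.
pose U x := exists t, I t x.
have hU : ideal_of e U.
  split; first by exists 0%N; case: (hI 0%N).
  split.
    move=> x y [i hx] [j hy]; exists (maxn i j); case: (hI (maxn i j)) => _ [hD _].
    by apply: hD; [exact: hmono (leq_maxl i j) _ hx | exact: hmono (leq_maxr i j) _ hy].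
  split; first by move=> r x hr [i hx]; exists i; case: (hI i) => _ [_ [hM _]]; exact: hM.
  by move=> x [i hx]; case: (hI i) => _ [_ [_ hC]]; exact: hC.
have [k [g [hg hgU]]] := hN hU.
have [f hf] := fin_all_exists hg.
exists (\max_(t < k) f t) => x hx.
have [c [hc ->]] := (proj1 (hgU x)) (ex_intro _ _ hx).
have [_ [_ [hM _]]] := hI (\max_(t < k) f t).
apply: ideal_sum => [|t]; first exact: ideal_ofW (hI _).
by apply: hM => //; exact: hmono (leq_bigmax t) _ (hf t).
Qed.

Lemma corner_noetherian_maximal (F : (R -> Prop) -> Prop) :
  (exists J, F J) -> (forall J, F J -> ideal_of e J) ->
  exists2 J, F J & forall J', F J' -> incl J J' -> incl J' J.
Proof.
move=> [J0 hJ0] hFi; apply: NNPP => hno.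
pose grows J J' := F J' /\ incl J J' /\ ~ incl J' J.
have step J : F J -> exists J', grows J J'.
  move=> hJ; apply: NNPP => h1; apply: hno; exists J => // J' hJ' hJJ'.
  by apply: NNPP => h2; apply: h1; exists J'.
pose next J := epsilon (inhabits J) (fun J' => F J -> grows J J').
have hnext J : F J -> grows J (next J).
  move=> hJ; apply: (epsilon_spec (inhabits J) (fun J' => F J -> grows J J')) => //.
  by have [J' hJ'] := step J hJ; exists J'.
pose chain k := iter k next J0.
have hF k : F (chain k) by elim: k => [|k IH] //=; case: (hnext _ IH).
have [N hN'] := corner_noetherian_stable (fun k => hFi _ (hF k))
  (fun k => proj1 (proj2 (hnext _ (hF k)))).
by case: (hnext _ (hF N)) => _ [_]; apply.
Qed.

Lemma exists_corner_maximal I : ideal_of e I -> ~ I e ->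
  exists2 P, corner_maximal e P & incl I P.
Proof.
move=> hI hIe.
have [P [hP [hIP hPe]] hmax] := corner_noetherian_maximal
  (F := fun J => ideal_of e J /\ incl I J /\ ~ J e)
  (ex_intro _ I (conj hI (conj (fun x h => h) hIe))) (fun J h => proj1 h).
exists P => //; split => //; split => // J hJ hPJ hJe.
by apply: hmax => //; split => //; split => // x hx; apply: hPJ; exact: hIP.
Qed.

End NoetherianCorner.

Lemma corner_pir_noetherian (R : comNzRingType) (e : R) :
  corner_pir e -> corner_noetherian e.
Proof.
move=> hp I hI; have [a [ha hI']] := hp I hI.
exists 1%N, (fun _ => a); split => // x; rewrite hI'; split.
  by case=> r [hr ->]; exists (fun _ => r); rewrite big_ord1.
by case=> c [hc ->]; exists (c ord0); rewrite big_ord1.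
Qed.

Lemma corner_maximal_comax (R : comNzRingType) (e : R) P c :
  e * e = e -> corner_maximal e P -> corner e c -> ~ P c ->
  exists d p, [/\ corner e d, P p & e = d * c + p].
Proof.
move=> He [hP [hPe hmax]] hc hPc.
pose K w := exists d p, [/\ corner e d, P p & w = d * c + p].
have hK : ideal_of e K.
  case: hP => h0 [hD [hM hC]].
  split; first by exists 0, 0; split; rewrite ?mul0r ?addr0 //; exact: corner0.
  split.
    move=> x y [d1 [p1 [h1 h1' ->]]] [d2 [p2 [h2 h2' ->]]].
    by exists (d1 + d2), (p1 + p2); split; [exact: cornerD | exact: hD | rewrite mulrDl addrACA].
  split.
    move=> r x hr [d [p [hd hp ->]]]; exists (r * d), (r * p).
    by split; [exact: corner_mull | exact: hM | rewrite mulrDr mulrA].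
  move=> x [d [p [hd hp ->]]]; apply: cornerD; last exact: hC.
  exact: corner_mulr.
apply: NNPP => hno; apply: hPc; apply: (hmax K hK) => [x hx||].
- by exists 0, x; split; rewrite ?mul0r ?add0r //; exact: corner0.
- by move=> [d [p hdp]]; apply: hno; exists d, p.
- exists e, 0; split; [exact: corner_e | by case: hP | by rewrite addr0 cornerK].
Qed.

Section CyclicComponent.
Variables (R : comNzRingType) (M : lmodType R) (e : R).
Hypothesis He : e * e = e.

Definition component_iso_corner : Prop :=
  iso_on (V := R^o) (W := M) (corner e) (corner e) (@component R M e).

Definition component_iso_quotient : Prop :=
  exists I : R -> Prop, ideal_of e I /\ nonzero_ideal I /\
    quot_iso_on (V := R^o) (W := M) (corner e) (corner e) I (@component R M e).

Definition component_iso_ideal : Prop :=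
  exists I : R -> Prop, ideal_of e I /\ nonzero_ideal I /\
    iso_on (V := R^o) (W := M) (corner e) I (@component R M e).

Definition cyclic_colon (z : M) (r : R) : Prop :=
  corner e r /\ forall m, component e m -> exists c, r *: m = c *: z.

Lemma cyclic_colon_ideal (z : M) : ideal_of e (cyclic_colon z).
Proof.
split; first by split; [exact: corner0 | move=> m _; exists 0; rewrite !scale0r].
split.
  move=> x y [hx Hx] [hy Hy]; split; first exact: cornerD.
  move=> m hm; have [c1 h1] := Hx m hm; have [c2 h2] := Hy m hm.
  by exists (c1 + c2); rewrite !scalerDl h1 h2.
split; last by move=> x [].
move=> r x hr [hx Hx]; split; first exact: corner_mull.
by move=> m hm; have [c h] := Hx m hm; exists (r * c); rewrite -!scalerA h.
Qed.

Lemma multiplication_cyclic_colon (z : M) :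
  multiplication_module M -> component e z -> ideal_smul (cyclic_colon z) z.
Proof.
move=> hmm hz.
pose N w := exists c, w = c *: z.
have hN : submodule N.
  split; first by exists 0; rewrite scale0r.
  split; first by move=> x y [c1 ->] [c2 ->]; exists (c1 + c2); rewrite scalerDl.
  by move=> r x [c ->]; exists (r * c); rewrite scalerA.
have [I [hI hNI]] := hmm N hN.
have : N z by exists 1; rewrite scale1r.
move=> /hNI [k [r [m [hr hz']]]].
exists k, (fun t => e * r t), m; split.
  move=> t; split; first by exists (r t).
  move=> m' hm'; have [c hc] : N (r t *: m') by apply/hNI; exact: ideal_smul_mem.
  by exists c; rewrite mulrC -scalerA (componentK He hm').
rewrite -{1}(componentK He hz) hz' scaler_sumr.
by apply: eq_bigr => t _; rewrite scalerA.
Qed.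

Lemma cyclic_colon_nonzero (z : M) : multiplication_module M -> component e z -> z != 0 ->
  exists2 a, cyclic_colon z a & a != 0.
Proof.
move=> hmm hz hz0; have [k [j [m [hj hzs]]]] := multiplication_cyclic_colon hmm hz.
apply: NNPP => hno; move/eqP: hz0; apply; rewrite hzs big1 // => t _.
have -> : j t = 0 by apply/eqP; apply: NNPP => h; apply: hno; exists (j t) => //; exact/negP.
by rewrite scale0r.
Qed.

Lemma component_maximal_decomp P (x : M) :
  multiplication_module M -> corner_maximal e P -> component e x -> ~ ideal_smul P x ->
  forall m, component e m -> exists c p, P p /\ m = c *: x + p *: m.
Proof.
move=> hmm hPmax hx hxP m hm.
have [k [j [mm [hj hxs]]]] := multiplication_cyclic_colon hmm hx.
have [t hjt] : exists t, ~ P (j t).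
  apply: NNPP => hno; apply: hxP; exists k, j, mm; split => // t.
  by apply: NNPP => h; apply: hno; exists t.
have [hjc hjm] := hj t; have [c hc] := hjm m hm.
have [d [p [hd hp hed]]] := corner_maximal_comax He hPmax hjc hjt.
exists (d * c), p; split => //.
by rewrite -{1}(componentK He hm) hed scalerDl -scalerA hc scalerA.
Qed.

Lemma not_maximal_smulZ P c (y : M) : corner_maximal e P -> corner e c -> ~ P c ->
  component e y -> ~ ideal_smul P y -> ~ ideal_smul P (c *: y).
Proof.
move=> hPmax hc hPc hy hyP hcy; apply: hyP.
have [d [p [hd hp hed]]] := corner_maximal_comax He hPmax hc hPc.
have hPi : ideal P by apply: (ideal_ofW He); case: hPmax.
rewrite -(componentK He hy) hed scalerDl -scalerA.
by apply: ideal_smulD; [exact: ideal_smulZ | exact: ideal_smul_mem].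
Qed.

(* The orbit map r |-> r x is injective on eR when ann(x) = 0, and presents eM
   as eR / ann(x) otherwise. *)
Lemma cyclic_component_iso (x : M) : component e x ->
  (forall m, component e m -> exists c, m = c *: x) ->
  component_iso_corner \/ component_iso_quotient.
Proof.
move=> hx hgen.
pose f (r : R^o) : M := (r : R) *: x.
have fD a b : f (a + b) = f a + f b by rewrite /f scalerDl.
have fZ a b : f (a * b) = a *: f b by rewrite /f scalerA.
have fA r : corner e r -> component e (f r) by move=> _; exact: componentZ.
have fS y : component e y -> exists r, corner e r /\ f r = y.
  move=> hy; have [c ->] := hgen y hy; exists (c * e); split; first exact: corner_me.
  by rewrite /f -scalerA (componentK He hx).
case: (classic (exists r, corner e r /\ f r = 0 /\ r != 0)) => [[r0 [hr0 [hr0x hr0n]]]|hno].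
  right; exists (fun r => corner e r /\ f r = 0); split.
    split; first by split; [exact: corner0 | rewrite /f scale0r].
    split; first by move=> a b [ha hax] [hb hbx]; split; [exact: cornerD | rewrite fD hax hbx addr0].
    split; last by move=> a [].
    by move=> a b ha [hb hbx]; split; [exact: corner_mull | rewrite fZ hbx scaler0].
  split; first by exists r0.
  exists f; split => //; split => [a b _ _|]; first exact: fD.
  split => [a b _ _|]; first exact: fZ.
  by split => // r hr; split => [|[]//]; split.
left; exists f; split => //; split => [a b _ _|]; first exact: fD.
split => [a b _ _|]; first exact: fZ.
split => // a b ha hb hab; apply: NNPP => hn; apply: hno.
exists (a - b); split; first exact: cornerB.
by rewrite /f scalerBl -/(f a) hab subrr subr_eq0; split => //; apply/eqP.
Qed.

End CyclicComponent.

Lemma nilpotent_generation (R : comNzRingType) (M : lmodType R) (B : M -> Prop)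
    (pi : R) (x : M) N :
  pi ^+ N = 0 -> (forall m, B m -> exists c m1, B m1 /\ m = c *: x + pi *: m1) ->
  forall m, B m -> exists c, m = c *: x.
Proof.
move=> hpiN hstep m hm.
suff [c [m1 [_ ->]]] : exists c m1, B m1 /\ m = c *: x + pi ^+ N *: m1.
  by exists c; rewrite hpiN scale0r addr0.
elim: N {hpiN} => [|n [c [m1 [hm1 ->]]]].
  by exists 0, m; rewrite scale0r add0r expr0 scale1r.
have [c1 [m2 [hm2 ->]]] := hstep m1 hm1.
exists (c + pi ^+ n * c1), m2; split => //.
by rewrite scalerDr !scalerA -exprSr scalerDl addrA.
Qed.

Lemma ideal_smul_principal (R : comNzRingType) (M : lmodType R) (I : R -> Prop) pi (m : M) :
  (forall x, I x -> exists r, x = r * pi) -> ideal_smul I m -> exists w, m = pi *: w.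
Proof.
move=> hI [k [r [mm [hr ->]]]].
have [c hc] := fin_all_exists (fun t => hI _ (hr t)).
exists (\sum_(t < k) c t *: mm t); rewrite scaler_sumr.
by apply: eq_bigr => t _; rewrite hc scalerA mulrC.
Qed.

Section LocalCorner.
Variables (R : comNzRingType) (e : R) (P : R -> Prop).
Hypotheses (He : e * e = e) (hN : corner_noetherian e) (hPmax : corner_maximal e P)
  (hPuniq : forall Q, corner_maximal e Q -> forall x, Q x <-> P x).

Lemma corner_local_unit u : corner e u -> ~ P u -> exists2 v, corner e v & v * u = e.
Proof.
move=> hu hPu.
case: (classic (exists2 v, corner e v & e = v * u)) => [[v hv hvu]|hJe]; first by exists v.
have [Q hQ hJQ] := exists_corner_maximal He hN (ideal_of_principal e u) hJe.
exfalso; apply: hPu; apply/(hPuniq hQ); apply: hJQ.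
by exists e; [exact: corner_e | rewrite cornerK].
Qed.

(* The chain (pi^t) stabilises: e pi^N = r pi^(N+1), and e - r pi is a unit. *)
Lemma artinian_local_nilpotent pi : corner_artinian e -> P pi -> exists N, pi ^+ N = 0.
Proof.
move=> hart hpi; have hPi : ideal_of e P by case: hPmax.
have hpic : corner e pi by case: hPi => _ [_ [_]]; apply.
pose I t x := exists2 r, corner e r & x = r * pi ^+ t.
have hdesc t x : I t.+1 x -> I t x.
  by case=> r hr ->; exists (r * pi); [exact: corner_mulr | rewrite exprS mulrA].
have [N hstable] := hart I (fun t => ideal_of_principal e (pi ^+ t)) hdesc.
have [r hr hrN] : I N.+1 (e * pi ^+ N).
  by apply/(hstable N.+1 (leqnSn N)); exists e => //; exact: corner_e.
have hu : corner e (e - r * pi) by apply: cornerB; [exact: corner_e | exact: corner_mulr].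
have hPu : ~ P (e - r * pi).
  move=> hPu; case: hPmax => _ [hPe _]; apply: hPe.
  rewrite -(subrK (r * pi) e); case: hPi => _ [hD [hM _]].
  by apply: hD => //; apply: hM.
have [v hv hvu] := corner_local_unit hu hPu.
have hpiN : e * pi ^+ N = 0.
  by rewrite -hvu -mulrA mulrBl hrN -mulrA -exprS subrr mulr0.
by exists N.+1; rewrite exprS -{1}(cornerKr He hpic) -mulrA hpiN mulr0.
Qed.

End LocalCorner.

Lemma artinian_local_pir_cyclic (R : comNzRingType) (M : lmodType R) (e : R) :
  e * e = e -> multiplication_module M -> corner_artinian_local_pir e ->
  exists x : M, component e x /\ forall m, component e m -> exists c, m = c *: x.
Proof.
move=> He hmm [hart [[P [hPmax hPuniq]] hpir]].
have hN := corner_pir_noetherian hpir.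
have hPi : ideal_of e P by case: hPmax.
have [pi [hpi hPpi]] := hpir P hPi.
have hpic : corner e pi by case: hPi => _ [_ [_]]; apply.
have [N hpiN] := artinian_local_nilpotent He hN hPmax hPuniq hart hpi.
have hPmul x : P x -> exists r, corner e r /\ x = r * pi by move/hPpi.
have hPM (m : M) : ideal_smul P m -> exists w, m = pi *: w.
  by apply: ideal_smul_principal => x /hPmul [r [_ ->]]; exists r.
case: (classic (exists2 x : M, component e x & ~ ideal_smul P x)) => [[x hx hxP]|hall].
  exists x; split => //; apply: (nilpotent_generation hpiN) => m hm.
  have [c [p [hp ->]]] := component_maximal_decomp He hmm hPmax hx hxP hm.
  have [r [_ ->]] := hPmul p hp.
  by exists c, (r *: m); split; [exact: componentZ | rewrite scalerA mulrC -scalerA].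
exists 0; split; first exact: component0.
apply: (nilpotent_generation hpiN) => m hm.
have [w ->] : exists w, m = pi *: w.
  by apply: hPM; apply: NNPP => h; apply: hall; exists m.
exists 0, (e *: w); split; first exact: component_e.
by rewrite scale0r add0r -scale_corner.
Qed.

Lemma maximal_eq_of_mul_sub (R : comNzRingType) (e : R) (Q P I : R -> Prop) :
  e * e = e -> corner_maximal e Q -> corner_maximal e P ->
  incl (ideal_mul I P) Q -> ~ incl (fun r => I r /\ corner e r) Q ->
  forall x, Q x <-> P x.
Proof.
move=> He hQmax hPmax hIPQ hIQ.
have [c [hcI hc] hQc] := not_incl hIQ.
have [d [q [hd hq hed]]] := corner_maximal_comax He hQmax hc hQc.
have [[Q0 [QD [QM QC]]] [hQe _]] := hQmax.
have hPQ p : P p -> Q p.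
  move=> hp; have hpc : corner e p by case: hPmax => [[_ [_ [_ hC]]] _]; exact: hC.
  rewrite -(cornerK He hpc) hed mulrDl -mulrA.
  apply: QD; last by rewrite mulrC; apply: QM.
  by apply: QM => //; apply: hIPQ; exact: ideal_mul_mem.
move=> x; split; last exact: hPQ.
by case: hPmax => _ [_ hmax]; apply: hmax.
Qed.

Section DedekindRing.
Variables (R : comNzRingType) (e : R).
Hypotheses (He : e * e = e) (hdom : corner_domain e) (hmr : multiplication_ring R).

(* a R = I2 I is contained in I2 I P = a R P, so a = a q with q in P, and
   q = e by cancellation in the domain eR. *)
Lemma ideal_sub_mul_full (I P : R -> Prop) a : ideal I -> I a -> corner e a -> a != 0 ->
  ideal_of e P -> incl I (ideal_mul I P) -> P e.
Proof.
move=> hI hIa hac ha0 hP hIP.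
pose aR w := exists r, w = a * r.
have haR : ideal aR.
  split; first by exists 0; rewrite mulr0.
  split; first by move=> x y [r1 ->] [r2 ->]; exists (r1 + r2); rewrite mulrDr.
  by move=> r x [r1 ->]; exists (r * r1); rewrite mulrCA.
have haRI : incl aR I by move=> x [r ->]; rewrite mulrC; case: hI => _ [_]; apply.
have [I2 [_ hI2]] := hmr hI haR haRI.
have [[P0 [PD [_ PC]]] hPi] := (hP, ideal_ofW He hP).
pose aP w := exists2 q, P q & w = a * q.
have aPD x y : aP x -> aP y -> aP (x + y).
  by move=> [q1 h1 ->] [q2 h2 ->]; exists (q1 + q2); [exact: PD | rewrite mulrDr].
have [q hq haq] : aP a.
  have /hI2 [k [c [d [hcd ->]]]] : aR a by exists 1; rewrite mulr1.
  apply: big_ind => [|//|t _]; first by exists 0; rewrite ?mulr0.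
  have [hc hd] := hcd t; have [k2 [f [g [hfg ->]]]] := hIP _ hd.
  rewrite mulr_sumr; apply: big_ind => [|//|s _]; first by exists 0; rewrite ?mulr0.
  have [hf hg] := hfg s; have [r hr] : aR (c t * f s) by apply/hI2; exact: ideal_mul_mem.
  exists (r * g s); last by rewrite mulrA hr mulrA.
  by case: hPi => _ [_]; apply.
have : a * (e - q) = 0 by rewrite mulrBr (cornerKr He hac) -haq subrr.
move=> h0; have [_ /(_ _ _ hac (cornerB (corner_e e) (PC _ hq)) h0) [/eqP|]] := hdom.
  by rewrite (negPf ha0).
by move/eqP; rewrite subr_eq0 => /eqP ->.
Qed.

(* Otherwise I = I1 P would lie in I P, contradicting ideal_sub_mul_full. *)
Lemma mul_maximal_strict (I I1 P : R -> Prop) a : ideal_of e I -> ideal I1 ->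
  corner_maximal e P -> (forall x, I x <-> ideal_mul I1 P x) -> I a -> a != 0 ->
  ~ incl (fun r => I1 r /\ corner e r) I.
Proof.
move=> hI hI1 hPmax hII1 ha ha0 hsub.
have [hPi [hPe _]] := hPmax.
have hPc : incl P (corner e) by case: hPi => _ [_ [_]].
apply: hPe; apply: (ideal_sub_mul_full (ideal_ofW He hI) ha _ ha0 hPi).
  by case: hI => _ [_ [_]]; apply.
by move=> x /hII1 /(ideal_mul_corner He hI1 hPc); exact: ideal_mulWl.
Qed.

End DedekindRing.

Section TorsionComponent.
Variables (R : comNzRingType) (M : lmodType R) (e : R).
Hypotheses (He : e * e = e) (hdom : corner_domain e) (hmr : multiplication_ring R)
  (hN : corner_noetherian e) (hmm : multiplication_module M)
  (htor : forall x : M, component e x -> exists s, [/\ corner e s, s != 0 & s *: x = 0]).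

Definition component_ann (r : R) : Prop :=
  corner e r /\ forall m : M, component e m -> r *: m = 0.

Lemma component_ann_ideal : ideal_of e component_ann.
Proof.
split; first by split; [exact: corner0 | move=> m _; rewrite scale0r].
split.
  move=> x y [hx Hx] [hy Hy]; split; first exact: cornerD.
  by move=> m hm; rewrite scalerDl Hx // Hy // addr0.
split; last by move=> x [].
move=> r x hr [hx Hx]; split; first exact: corner_mull.
by move=> m hm; rewrite -scalerA Hx // scaler0.
Qed.

Lemma component_ann_nonzero : exists2 a, component_ann a & a != 0.
Proof.
have [hdom0 hdomP] := hdom.
case: (classic (exists2 x : M, component e x & x != 0)) => [[x hx hx0]|hno].
  have [a [hac haJ] ha0] := cyclic_colon_nonzero He hmm hx hx0.
  have [s [hs hs0 hsx]] := htor hx.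
  exists (s * a).
    split; first exact: corner_mulr.
    move=> m hm; have [c hc] := haJ m hm.
    by rewrite -scalerA hc scalerA mulrC -scalerA hsx scaler0.
  by apply/eqP => /(hdomP _ _ hs hac) [] /eqP; rewrite ?(negPf hs0) ?(negPf ha0).
exists e => //; split; first exact: corner_e.
move=> m hm; have -> : m = 0 by apply: NNPP => h; apply: hno; exists m => //; exact/eqP.
by rewrite scaler0.
Qed.

(* If eM = P eM then P' (P eM) = 0 for the factor P' with ann = P' P, so
   P' is inside ann = P' P, which cancellation forbids. *)
Lemma component_not_maximal_smul P : corner_maximal e P -> incl component_ann P ->
  exists2 y : M, component e y & ~ ideal_smul P y.
Proof.
move=> hPmax hAP; apply: NNPP => hno.
have hall (y : M) : component e y -> ideal_smul P y.
  by move=> hy; apply: NNPP => h; apply: hno; exists y.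
have [hPi [hPe _]] := hPmax.
have hPc : incl P (corner e) by case: hPi => _ [_ [_]].
have [P' [hP' hAnn]] := hmr (ideal_ofW He hPi) (ideal_ofW He component_ann_ideal) hAP.
pose P'c r := P' r /\ corner e r.
have [a ha ha0] := component_ann_nonzero.
have hP'a : P'c a by split; [apply: (ideal_mul_subl hP'); apply/hAnn | case: ha].
apply: hPe; apply: (ideal_sub_mul_full He hdom hmr _ hP'a (proj1 ha) ha0 hPi).
  exact (ideal_ofW He (ideal_of_meet_corner e hP')).
move=> r [hr hrc].
  have hAr : component_ann r.
  split => // m hm; have [k [p [mm [hp ->]]]] := hall m hm.
  rewrite scaler_sumr big1 // => t _; rewrite scalerA.
  have [_ hA] : component_ann (r * p t) by apply/hAnn; exact: ideal_mul_mem.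
  by rewrite (scale_corner He _ (corner_mull _ (hPc _ (hp t)))) hA //; exact: component_e.
by apply: (ideal_mul_corner He hP' hPc); apply/hAnn.
Qed.

Definition avoids (z : M) (I : R -> Prop) : Prop :=
  forall Q, corner_maximal e Q -> incl I Q -> ~ ideal_smul Q z.

Lemma avoids_add (J P : R -> Prop) c (z1 y : M) :
  corner_maximal e P -> J c -> corner e c -> ~ P c -> component e y -> ~ ideal_smul P y ->
  ideal_smul P z1 -> avoids z1 J -> avoids (z1 + c *: y) J /\ ~ ideal_smul P (z1 + c *: y).
Proof.
move=> hPmax hJc hc hPc hy hyP hz1P hz1; split.
  move=> Q hQmax hJQ hz; apply: (hz1 Q hQmax hJQ).
  have hQi : ideal Q by apply: (ideal_ofW He); case: hQmax.
  rewrite -(addrK (c *: y) z1); apply: ideal_smulB => //.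
  by apply: ideal_smul_mem; exact: hJQ.
move=> hz; apply: (not_maximal_smulZ He hPmax hc hPc hy hyP).
have hPi : ideal P by apply: (ideal_ofW He); case: hPmax.
by rewrite -(addKr z1 (c *: y)) addrC; exact: ideal_smulB.
Qed.

(* Induction step: with I = I1 P for a maximal P above I, either the
   element avoiding all maximal ideals above I1 already works, or it can be
   corrected by c y with c in I1 \ P and y outside P eM. *)
Lemma avoids_step I : ideal_of e I -> incl component_ann I ->
  (forall I', ideal_of e I' -> incl I I' -> ~ incl I' I -> exists2 z, component e z & avoids z I') ->
  exists2 z, component e z & avoids z I.
Proof.
move=> hI hAI IH.
case: (classic (I e)) => [hIe|hIe].
  exists 0; first exact: component0.
  by move=> Q [_ [hQe _]] hIQ; case: (hQe (hIQ e hIe)).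
have [P hPmax hIP] := exists_corner_maximal He hN hI hIe.
have hPi : ideal_of e P by case: hPmax.
have [I1 [hI1 hII1]] := hmr (ideal_ofW He hPi) (ideal_ofW He hI) hIP.
pose I1c r := I1 r /\ corner e r.
have hIsub : incl I I1c.
  move=> x hx; split; last by case: hI => _ [_ [_]]; apply.
  by apply: (ideal_mul_subl hI1); apply/hII1.
have [a ha ha0] := component_ann_nonzero.
have [z1 hz1 Hz1] := IH _ (ideal_of_meet_corner e hI1) hIsub
  (mul_maximal_strict He hdom hmr hI hI1 hPmax hII1 (hAI _ ha) ha0).
have hQ Q : corner_maximal e Q -> incl I Q -> incl I1c Q \/ (forall x, Q x <-> P x).
  move=> hQmax hIQ; case: (classic (incl I1c Q)) => h; [by left | right].
  by apply: (maximal_eq_of_mul_sub He hQmax hPmax _ h) => x /hII1 /hIQ.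
have [z hz [Hz HzP]] : exists2 z, component e z &
    avoids z I1c /\ (incl I1c P \/ ~ ideal_smul P z).
  case: (classic (incl I1c P)) => [hI1P|/not_incl [c [hcI hc] hPc]].
    by exists z1 => //; split => //; left.
  case: (classic (ideal_smul P z1)) => [hz1P|hz1P]; last by exists z1 => //; split => //; right.
  have [y hy hyP] := component_not_maximal_smul hPmax (fun x hx => hIP _ (hAI _ hx)).
  have [Hz HzP] := avoids_add hPmax (conj hcI hc) hc hPc hy hyP hz1P Hz1.
  by exists (z1 + c *: y); [apply: componentD => //; exact: componentZ | split => //; right].
exists z => // Q hQmax hIQ; case: (hQ Q hQmax hIQ) => [|hQP]; first exact: Hz.
case: HzP => [hI1P|hzP].
  by apply: Hz => // x /hI1P /hQP.
by move=> hzQ; apply: hzP; apply: ideal_smulW hzQ => x /hQP.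
Qed.

Lemma avoids_exists I : ideal_of e I -> incl component_ann I ->
  exists2 z, component e z & avoids z I.
Proof.
move=> hI hAI; apply: NNPP => hno.
have [J [hJ [hAJ hJno]] hmax] := corner_noetherian_maximal He hN
  (F := fun J => ideal_of e J /\ incl component_ann J /\ ~ exists2 z, component e z & avoids z J)
  (ex_intro _ I (conj hI (conj hAI hno))) (fun J h => proj1 h).
apply: hJno; apply: avoids_step => // I' hI' hJI' hnI'.
apply: NNPP => hC'; apply: hnI'; apply: hmax => //; split => //; split => //.
by move=> x /hAJ /hJI'.
Qed.

(* An element avoiding every maximal ideal above ann(eM) generates eM: its
   cyclic colon ideal contains ann(eM) and z lies in (colon) eM, so the colon
   ideal lies in no maximal ideal, i.e. it contains e. *)
Lemma torsion_component_cyclic :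
  exists x : M, component e x /\ forall m, component e m -> exists c, m = c *: x.
Proof.
have [z hz Hz] := avoids_exists component_ann_ideal (fun x h => h).
exists z; split => //.
case: (classic (cyclic_colon e z e)) => [[_ hJ]|hJe].
  by move=> m hm; have [c hc] := hJ m hm; exists c; rewrite -hc (componentK He hm).
have [P hPmax hJP] := exists_corner_maximal He hN (cyclic_colon_ideal e z) hJe.
exfalso; apply: (Hz P hPmax).
  move=> x [hx Hx]; apply: hJP; split => // m hm; exists 0; by rewrite Hx // scale0r.
exact: ideal_smulW (multiplication_cyclic_colon He hmm hz).
Qed.

End TorsionComponent.

Section TorsionFreeComponent.
Variables (R : comNzRingType) (M : lmodType R) (e : R).
Hypotheses (He : e * e = e) (hdom : corner_domain e) (hmm : multiplication_module M).

Definition torsion (w : M) : Prop :=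
  component e w /\ exists s, [/\ corner e s, s != 0 & s *: w = 0].

Lemma torsion_submodule : submodule torsion.
Proof.
have [he0 hdomP] := hdom.
split; first by split; [exact: component0 | exists e; split; rewrite ?scaler0 //; exact: corner_e].
split.
  move=> w1 w2 [h1 [s1 [hs1 hs1n hs1w]]] [h2 [s2 [hs2 hs2n hs2w]]].
  split; first exact: componentD.
  exists (s1 * s2); split; first exact: corner_mulr.
    by apply/eqP => /(hdomP _ _ hs1 hs2) [] /eqP; rewrite ?(negPf hs1n) ?(negPf hs2n).
  have e1 : (s1 * s2) *: w1 = 0 by rewrite mulrC -scalerA hs1w scaler0.
  by rewrite scalerDr e1 -scalerA hs2w scaler0 addr0.
move=> r w [h [s [hs hsn hsw]]]; split; first exact: componentZ.
by exists s; split => //; rewrite scalerA mulrC -scalerA hsw scaler0.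
Qed.

(* With torsion = I M, each i in I sends x into the torsion, so i e = 0 as x
   is torsion-free; hence I eM = 0. *)
Lemma component_torsion_free (x : M) : component e x ->
  (forall r, corner e r -> r *: x = 0 -> r = 0) -> forall y, torsion y -> y = 0.
Proof.
move=> hx htf; have [he0 hdomP] := hdom.
have [I [hI hTI]] := hmm torsion_submodule.
have hIe i : I i -> i * e = 0.
  move=> hi; have [_ [s [hs hsn hsx]]] : torsion (i *: x) by apply/hTI; exact: ideal_smul_mem.
  have : s * (i * e) = 0.
    apply: htf; first exact: corner_mull (corner_me e i).
    by rewrite -!scalerA (componentK He hx).
  by case/(hdomP _ _ hs (corner_me e i)) => // /eqP; rewrite (negPf hsn).
move=> y hy; have [k [i [m [hi hym]]]] := (proj1 (hTI y)) hy.
rewrite -(componentK He (proj1 hy)) hym scaler_sumr big1 // => u _.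
by rewrite scalerA mulrC hIe // scale0r.
Qed.

Definition transporter (a : R) (x : M) (r : R) : Prop :=
  corner e r /\ exists2 y, component e y & a *: y = r *: x.

Lemma transporter_ideal a x : ideal_of e (transporter a x).
Proof.
split; first by split; [exact: corner0 | exists 0; rewrite ?scaler0 ?scale0r //; exact: component0].
split.
  move=> r1 r2 [c1 [y1 hy1 e1]] [c2 [y2 hy2 e2]]; split; first exact: cornerD.
  by exists (y1 + y2); [exact: componentD | rewrite scalerDr e1 e2 scalerDl].
split; last by move=> r [].
move=> b r hb [c [y hy ey]]; split; first exact: corner_mull.
exists (b *: y); first exact: componentZ.
by rewrite -[RHS]scalerA -ey !scalerA mulrC.
Qed.

(* Multiplication by a nonzero a of the cyclic colon of x embeds eM into eR x,
   and eR x is isomorphic to eR; the resulting ideal is the transporter. *)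
Lemma torsion_free_iso_ideal (x : M) : component e x ->
  (forall r, corner e r -> r *: x = 0 -> r = 0) -> component_iso_ideal M e.
Proof.
move=> hx htf; have [he0 _] := hdom.
have hx0 : x != 0.
  apply/eqP => hx0; move/eqP: he0; apply; apply: htf; first exact: corner_e.
  by rewrite hx0 scaler0.
have [a [hac haJ] ha0] := cyclic_colon_nonzero He hmm hx hx0.
have ha_inj (y1 y2 : M) : component e y1 -> component e y2 -> a *: y1 = a *: y2 -> y1 = y2.
  move=> h1 h2 h; apply/eqP; rewrite -subr_eq0; apply/eqP.
  apply: (component_torsion_free hx htf); split; first exact: componentB.
  by exists a; split => //; rewrite scalerBr h subrr.
pose f (r : R^o) : M :=
  epsilon (inhabits 0) (fun y => component e y /\ a *: y = (r : R) *: x).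
have hf r : transporter a x r -> component e (f r) /\ a *: f r = r *: x.
  move=> [_ [y hy ey]].
  by apply: (epsilon_spec (inhabits 0) (fun y => component e y /\ a *: y = r *: x)); exists y.
have [K0 [KD [KZ KC]]] := transporter_ideal a x.
exists (transporter a x); split; first exact: transporter_ideal.
split; first by exists a; split => //; split => //; exists x.
exists f; split; first by move=> r /hf [].
split.
  move=> r1 r2 h1 h2; have [c1 e1] := hf _ h1; have [c2 e2] := hf _ h2.
  have [c12 e12] := hf _ (KD _ _ h1 h2).
  apply: ha_inj => //; first exact: componentD.
  by rewrite e12 scalerDr e1 e2 scalerDl.
split.
  move=> b r hb hr; have [c1 e1] := hf _ hr; have [c2 e2] := hf _ (KZ _ _ hb hr).
  apply: ha_inj => //; first exact: componentZ.
  by rewrite e2 [RHS]scalerA (mulrC a b) -[RHS]scalerA e1 scalerA.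
split.
  move=> r1 r2 h1 h2 h; have [_ e1] := hf _ h1; have [_ e2] := hf _ h2.
  apply/eqP; rewrite -subr_eq0; apply/eqP; apply: htf; first exact: cornerB (KC _ h1) (KC _ h2).
  by rewrite scalerBl -e1 -e2 h subrr.
move=> y hy; have [c hc] := haJ y hy.
have hKc : transporter a x (c * e).
  split; first exact: corner_me.
  by exists y => //; rewrite hc -scalerA (componentK He hx).
exists (c * e); split => //; have [c1 e1] := hf _ hKc.
by apply: ha_inj => //; rewrite e1 hc -scalerA (componentK He hx).
Qed.

End TorsionFreeComponent.

Lemma dedekind_component_classification (R : comNzRingType) (M : lmodType R) (e : R) :
  e * e = e -> multiplication_ring R -> multiplication_module M -> corner_dedekind e ->
  [\/ component_iso_corner M e, component_iso_quotient M e | component_iso_ideal M e].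
Proof.
move=> He hmr hmm [hdom [hN _]].
case: (classic (exists2 x : M, component e x &
         forall r, corner e r -> r *: x = 0 -> r = 0)) => [[x hx htf]|hno].
  by apply: Or33; exact: torsion_free_iso_ideal htf.
have htor (x : M) : component e x -> exists s, [/\ corner e s, s != 0 & s *: x = 0].
  move=> hx; apply: NNPP => h; apply: hno; exists x => // r hr hrx.
  by apply/eqP; apply: NNPP => h'; apply: h; exists r; split => //; exact/negP.
have [x [hx hgen]] := torsion_component_cyclic He hdom hmr hN hmm htor.
by case: (cyclic_component_iso He hx hgen) => h; [apply: Or31 | apply: Or32].
Qed.

Theorem theorem1p2 (R : comNzRingType) (M : lmodType R) (n : nat) (e : 'I_n -> R) :
  multiplication_ring R ->
  finitely_many_minimal_primes R ->
  (forall i, e i * e i = e i) ->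
  (forall i j, i != j -> e i * e j = 0) ->
  \sum_(i < n) e i = 1 ->
  (forall i, corner_dedekind (e i) \/ corner_artinian_local_pir (e i)) ->
  (multiplication_module M <->
   forall i : 'I_n,
     iso_on (V := R^o) (W := M) (corner (e i)) (corner (e i)) (@component R M (e i))
     \/ (exists I : R -> Prop, ideal_of (e i) I /\ nonzero_ideal I /\
           quot_iso_on (V := R^o) (W := M) (corner (e i)) (corner (e i)) I
                       (@component R M (e i)))
     \/ (corner_dedekind (e i) /\
         exists I : R -> Prop, ideal_of (e i) I /\ nonzero_ideal I /\
           iso_on (V := R^o) (W := M) (corner (e i)) I (@component R M (e i)))).
Proof.
move=> hmr _ He _ hsum hcases; split=> [hmm i|hcomp].
  case: (hcases i) => [hded|hloc].
    by case: (dedekind_component_classification (He i) hmr hmm hded); auto.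
  have [x [hx hgen]] := artinian_local_pir_cyclic (He i) hmm hloc.
  by case: (cyclic_component_iso (He i) hx hgen); auto.
apply: (multiplication_module_of_epi hmr He hsum) => i.
case: (hcomp i) => [h|[[I [_ [_ h]]]|[_ [I [hI [_ h]]]]]].
- by exists (corner (e i)); [exact: ideal_of_corner | exact: iso_on_epi h].
- by exists (corner (e i)); [exact: ideal_of_corner | exact: quot_iso_on_epi h].
- by exists I => //; exact: iso_on_epi h.
Qed.
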